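(* Let $n\ge3$, let $t_1,\dots,t_m\in\mathcal{T}_n$ and let $w_1,\dots,w_m$ be positive real weights, and let $c$ be the weighted asymmetric tropical consensus tree of $(t_1,w_1),\dots,(t_m,w_m)$. Then for all distinct leaves $i,j,k\in[n]$: (Pareto) if every $t_l$ contains the rooted triple $ij|k$, then $c$ contains $ij|k$; (co-Pareto) if $c$ contains $ij|k$, then at least one $t_l$ contains $ij|k$.
   Context: $N=\binom n2$, coordinates of $\mathbb{R}^N$ indexed by pairs $\{i,j\}\subset[n]$. An ultrametric is $\delta\in\mathbb{R}^N$ such that for all distinct $i,j,k$ the maximum of $\delta(i,j),\delta(i,k),\delta(j,k)$ is attained at least twice; ultrametrics are exactly the leaf-to-leaf distance vectors of equidistant rooted phylogenetic trees. $\mathcal{T}_n=\{-\delta:\delta\text{ ultrametric}\}$, viewed in $\mathbb{R}^N/\mathbb{R}\mathbf{1}_N$ and identified with $H_N=\{x\in\mathbb{R}^N:\sum x=0\}$. For $x,y\in H_N$, $d_\Delta(x,y)=N\max_p(x_p-y_p)$; the weighted Fermat–Weber set is $\mathrm{FW}(T,w)=\operatorname{argmin}_{x\in H_N}\sum_l w_l d_\Delta(x,t_l)$, a bounded polytope. The weighted asymmetric tropical consensus tree is the classical average of the vertices of $\mathrm{FW}(T,w)$ (a point of $\mathcal{T}_n$). A point $x\in\mathcal{T}_n$, with $\delta=-x$ (any representative), contains the rooted triple $ij|k$ if $\delta(i,j)<\delta(i,k)=\delta(j,k)$. *)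

From HB Require Import structures.
From mathcomp Require Import all_boot all_order all_algebra.
From mathcomp Require Import reals.
Set Implicit Arguments. Unset Strict Implicit. Unset Printing Implicit Defensive.
Import Order.TTheory GRing.Theory Num.Theory.
Local Open Scope ring_scope.

(* Unordered pairs {i,j} of distinct leaves of [n] = 'I_n: the N = 'C(n,2)
   coordinates of R^N. *)
Definition Pr (n : nat) := {A : {set 'I_n} | #|A| == 2}.

Notation pt R n := {ffun Pr n -> R}.

(* Coordinate x({i,j}) (only meaningful for i != j; 0 otherwise). *)
Definition ent (R : realType) (n : nat) (x : pt R n) (i j : 'I_n) : R :=
  if insub [set i; j] is Some p then x p else 0.

Definition ultrametric (R : realType) (n : nat) (d : pt R n) : Prop :=
  forall i j k : 'I_n, i != j -> i != k -> j != k ->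
    let a := ent d i j in let b := ent d i k in let c := ent d j k in
    [|| (a == b) && (c <= a), (a == c) && (b <= a) | (b == c) && (a <= b)].

Definition inH (R : realType) (n : nat) (x : pt R n) : Prop :=
  \sum_(p : Pr n) x p = 0.

(* Membership in T_n = {-delta : delta ultrametric}, identified with H_N. *)
Definition inTn (R : realType) (n : nat) (x : pt R n) : Prop :=
  inH x /\ ultrametric (- x).

(* Asymmetric tropical distance d_Delta(x,y) = N * max_p (x_p - y_p), for
   x, y in H_N (there the max is >= 0, so 0 is a harmless seed). *)
Definition dDelta (R : realType) (n : nat) (x y : pt R n) : R :=
  'C(n, 2)%:R * \big[Num.max/0]_(p : Pr n) (x p - y p).

Definition FWobj (R : realType) (n m : nat) (t : 'I_m -> pt R n)
  (w : 'I_m -> R) (x : pt R n) : R :=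
  \sum_(l < m) w l * dDelta x (t l).

Definition inFW (R : realType) (n m : nat) (t : 'I_m -> pt R n)
  (w : 'I_m -> R) (x : pt R n) : Prop :=
  inH x /\ forall y : pt R n, inH y -> FWobj t w x <= FWobj t w y.

Definition is_vertex (R : realType) (n : nat) (S : pt R n -> Prop)
  (x : pt R n) : Prop :=
  S x /\ forall (y z : pt R n) (a : R), S y -> S z -> 0 < a -> a < 1 ->
    (forall p, x p = a * y p + (1 - a) * z p) -> y = z.

Definition is_consensus (R : realType) (n m : nat) (t : 'I_m -> pt R n)
  (w : 'I_m -> R) (c : pt R n) : Prop :=
  exists s : seq (pt R n),
    [/\ uniq s,
        (forall v, v \in s <-> is_vertex (inFW t w) v) &
        forall p, c p = (size s)%:R^-1 * \sum_(v <- s) v p].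

Definition contains_triple (R : realType) (n : nat) (x : pt R n)
  (i j k : 'I_n) : Prop :=
  let d := - x in ent d i j < ent d i k /\ ent d i k = ent d j k.

(* Every point x of FW(T,w) is a tropical combination of the trees:
   x_p = min_l (t_l p + h_l) with h_l = max_q (x_q - t_l q), for otherwise
   raising x at a coordinate where no tree attains this minimum, and
   recentring, would decrease every d_Delta(x, t_l).  Hence a coordinatewise
   relation x_p < x_q or x_p <= x_q holding in every t_l holds in every vertex
   of FW(T,w), and so in their average c.  With delta = -x, "x contains ij|k"
   reads x(ik) < x(ij) and x(ik) = x(jk), which gives the Pareto property;
   FW(T,w) has a vertex since it is a nonempty compact set, on which a
   maximiser of the squared norm is extreme.  For co-Pareto: if no t_l
   contains ij|k, ultrametricity forces t_l(ij) <= t_l(ik) for all l, hence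
   c(ij) <= c(ik), contradicting c(ik) < c(ij). *)

From HB Require Import structures.
From mathcomp Require Import all_boot all_order all_algebra.
From mathcomp Require Import reals lra ring.
From mathcomp Require Import boolp classical_sets topology normedtype derive.
Import numFieldNormedType.Exports.
Import Order.TTheory GRing.Theory Num.Theory.
Local Open Scope ring_scope.
Set Implicit Arguments. Unset Strict Implicit.

Lemma card_pair n (i j : 'I_n) : i != j -> #|[set i; j]| == 2.
Proof. by move=> ij; rewrite cards2 ij. Qed.

Definition pair_of n (i j : 'I_n) (ij : i != j) : Pr n :=
  exist _ [set i; j] (card_pair ij).

Lemma ent_pair (R : realType) n (x : pt R n) (i j : 'I_n) (ij : i != j) :
  ent x i j = x (pair_of ij).
Proof.
by rewrite /ent (insubT (fun A : {set 'I_n} => #|A| == 2) (card_pair ij)).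
Qed.

Section Triples.
Variables (R : realType) (n : nat) (x : pt R n) (i j k : 'I_n).
Variables (ij : i != j) (ik : i != k) (jk : j != k).

Lemma contains_tripleE : contains_triple x i j k <->
  x (pair_of ik) < x (pair_of ij) /\ x (pair_of ik) = x (pair_of jk).
Proof.
rewrite /contains_triple !ent_pair !ffunE ltrN2.
by split=> -[lt_ki eq_kj]; split=> //; [exact: oppr_inj | rewrite eq_kj].
Qed.

Lemma ultrametric_not_triple : ultrametric (- x) -> ~ contains_triple x i j k ->
  x (pair_of ij) <= x (pair_of ik).
Proof.
move=> ultra; rewrite contains_tripleE => notT.
have := ultra i j k ij ik jk; rewrite /= !ent_pair !ffunE !eqr_opp !lerN2.
case/or3P=> [/andP[/eqP -> _] //|/andP[_ //]|/andP[/eqP eq_kj _]].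
by rewrite leNgt; apply/negP => lt_kj; apply: notT.
Qed.

End Triples.

Section MinPlus.
Variables (R : realDomainType) (I P : Type) (t : I -> P -> R) (a : I -> R).

Definition is_minplus (x : P -> R) : Prop :=
  (forall l p, x p <= t l p + a l) /\ (forall p, exists l, x p = t l p + a l).

Variables (x : P -> R) (x_minplus : is_minplus x).

Lemma minplus_le p q : (forall l, t l p <= t l q) -> x p <= x q.
Proof.
move=> le_pq; have [l ->] := x_minplus.2 q.
by apply: le_trans (x_minplus.1 l p) _; rewrite lerD2r.
Qed.

Lemma minplus_lt p q : (forall l, t l p < t l q) -> x p < x q.
Proof.
move=> lt_pq; have [l ->] := x_minplus.2 q.
by apply: le_lt_trans (x_minplus.1 l p) _; rewrite ltrD2r.
Qed.

End MinPlus.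

Section Mean.
Variables (R : numFieldType) (T : eqType) (s : seq T) (F G : T -> R).

Lemma mean_le : (forall v, v \in s -> F v <= G v) ->
  (size s)%:R^-1 * \sum_(v <- s) F v <= (size s)%:R^-1 * \sum_(v <- s) G v.
Proof.
move=> le_FG; rewrite ler_wpM2l ?invr_ge0 // !big_seq.
by apply: ler_sum => v; exact: le_FG.
Qed.

Lemma mean_lt : s != [::] -> (forall v, v \in s -> F v < G v) ->
  (size s)%:R^-1 * \sum_(v <- s) F v < (size s)%:R^-1 * \sum_(v <- s) G v.
Proof.
move=> s0 lt_FG; rewrite ltr_pM2l ?invr_gt0 ?ltr0n ?lt0n ?size_eq0 // !big_seq.
apply: ltr_sum => [|v]; last exact: lt_FG.
by case: s s0 {lt_FG} => // v r _; rewrite /= mem_head.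
Qed.

End Mean.

Section MaxDiff.
Variables (R : realType) (n : nat).
Implicit Types (x y : pt R n) (p q : Pr n).

Definition maxdiff x y : R := \big[Num.max/0]_p (x p - y p).

Lemma dDeltaE x y : dDelta x y = 'C(n, 2)%:R * maxdiff x y.
Proof. by []. Qed.

Lemma le_maxdiff x y p : x p - y p <= maxdiff x y.
Proof. exact: (le_bigmax _ (fun q => x q - y q)). Qed.

Lemma maxdiff_ge0 x y : 0 <= maxdiff x y.
Proof. exact: bigmax_ge_id. Qed.

Lemma inH_exists_le q x y : inH x -> inH y -> exists p, y p <= x p.
Proof.
move=> Hx Hy; apply: contrapT => /forallNP gt_yx.
have : \sum_p x p < \sum_p y p.
  apply: ltr_sum => [|p _].
    by apply/hasP; exists q; rewrite ?mem_index_enum.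
  by rewrite ltNge; apply/negP; exact: gt_yx.
by rewrite Hx Hy ltxx.
Qed.

Lemma maxdiff_le q x y b : inH x -> inH y -> (forall p, x p - y p <= b) ->
  maxdiff x y <= b.
Proof.
move=> Hx Hy le_b; have [p le_yx] := inH_exists_le q Hx Hy.
apply: bigmax_le => [|r _]; last exact: le_b.
by apply: le_trans (le_b p); rewrite subr_ge0.
Qed.

Lemma binom2_gt0 q : (0 < 'C(n, 2))%N.
Proof.
by have := max_card (mem (val q)); rewrite card_ord bin_gt0 (eqP (valP q)).
Qed.

Definition bump x q (e : R) : pt R n :=
  [ffun p => x p + (if p == q then e else 0) - e / #|{: Pr n}|%:R].

Lemma inH_bump x q e : inH x -> inH (bump x q e).
Proof.
rewrite /inH => Hx; under eq_bigr do rewrite ffunE.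
rewrite sumrB big_split /= Hx add0r sumr_const -big_mkcond big_pred1_eq.
rewrite -[_ *+ #|_|]mulr_natr mulfVK ?subrr //.
by rewrite pnatr_eq0 -lt0n; apply/card_gt0P; exists q.
Qed.

Lemma maxdiff_bump x y q e : inH x -> inH y ->
  e <= y q + maxdiff x y - x q ->
  maxdiff (bump x q e) y <= maxdiff x y - e / #|{: Pr n}|%:R.
Proof.
move=> Hx Hy le_e; apply: (maxdiff_le q (inH_bump q e Hx) Hy) => p.
by rewrite ffunE; have := le_maxdiff x y p; case: eqP => [->|_]; lra.
Qed.

End MaxDiff.

Section FermatWeber.
Variables (R : realType) (n m : nat) (t : 'I_m -> pt R n) (w : 'I_m -> R).
Hypotheses (m_gt0 : (0 < m)%N) (w_gt0 : forall l, 0 < w l).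
Hypothesis tH : forall l, inH (t l).
Local Notation C := ('C(n, 2)%:R : R).

Lemma FWobj_ge_term x l : w l * (C * maxdiff x (t l)) <= FWobj t w x.
Proof.
rewrite /FWobj (bigD1 l) //= dDeltaE lerDl; apply: sumr_ge0 => l' _.
by rewrite mulr_ge0 ?mulr_ge0 ?maxdiff_ge0 // ltW.
Qed.

Lemma FWobj_lt x y (d : R) : (0 < 'C(n, 2))%N -> 0 < d ->
  (forall l, maxdiff y (t l) <= maxdiff x (t l) - d) ->
  FWobj t w y < FWobj t w x.
Proof.
move=> C_gt0 d_gt0 le_yx; rewrite -subr_gt0 /FWobj -sumrB.
apply: (@lt_le_trans _ _ (\sum_(l < m) w l * (C * d))).
  rewrite (bigD1 (Ordinal m_gt0)) //= ltr_wpDr ?mulr_gt0 ?ltr0n //.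
  by apply: sumr_ge0 => l _; rewrite mulr_ge0 ?mulr_ge0 ?ler0n // ltW.
apply: ler_sum => l _; rewrite !dDeltaE -mulrBr ler_pM2l //.
rewrite -mulrBr ler_pM2l ?ltr0n //.
by have := le_yx l; lra.
Qed.

(* If no l is tight at q, bumping x at q by the least gap e lowers every
   maxdiff x (t l) by e / #|Pr n|. *)
Lemma FW_minplus x :
  inFW t w x -> is_minplus (fun l p => t l p) (fun l => maxdiff x (t l)) x.
Proof.
move=> [Hx x_min]; split=> [l p|q]; first by rewrite -lerBlDl le_maxdiff.
apply: contrapT => /forallNP not_tight.
have gap_gt0 l : 0 < t l q + maxdiff x (t l) - x q.
  rewrite subr_gt0 lt_neqAle -lerBlDl le_maxdiff andbT.
  by apply/eqP; exact: not_tight.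
pose e := \big[Num.min/1]_l (t l q + maxdiff x (t l) - x q).
have e_gt0 : 0 < e.
  by apply: (big_ind (fun v => 0 < v)) => // a b a0 b0; rewrite lt_min a0 b0.
have d_gt0 : (0 : R) < #|{: Pr n}|%:R.
  by rewrite ltr0n; apply/card_gt0P; exists q.
have := x_min _ (inH_bump q e Hx); apply/negP; rewrite -ltNge.
apply: (FWobj_lt (binom2_gt0 q) (divr_gt0 e_gt0 d_gt0)) => l.
by apply: maxdiff_bump => //; exact: bigmin_le.
Qed.

End FermatWeber.

Lemma sumsq_convex (R : comPzRingType) (I : finType) (a : R) (F G : I -> R) :
  \sum_p (a * F p + (1 - a) * G p) ^+ 2 =
  a * \sum_p F p ^+ 2 + (1 - a) * \sum_p G p ^+ 2
    - a * (1 - a) * \sum_p (F p - G p) ^+ 2.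
Proof.
rewrite !mulr_sumr -big_split -sumrB; apply: eq_bigr => p _ /=; ring.
Qed.

Section RowEncoding.
Variables (R : realType) (n : nat).
Local Open Scope classical_set_scope.
Local Notation V := 'rV[R]_#|{: Pr n}|.

Definition pt_of_rV (v : V) : pt R n := [ffun p => v ord0 (enum_rank p)].
Definition rV_of_pt (x : pt R n) : V := \row_i x (enum_val i).

Lemma rV_of_ptK : cancel rV_of_pt pt_of_rV.
Proof. by move=> x; apply/ffunP => p; rewrite !ffunE mxE enum_rankK. Qed.

Lemma pt_of_rV_continuous p : continuous (fun v : V => pt_of_rV v p).
Proof.
rewrite (_ : (fun v => _) = fun v : V => v ord0 (enum_rank p)).
  exact: coord_continuous.
by apply: funext => v; rewrite ffunE.
Qed.

Lemma sum_pt_of_rV_continuous (F : R -> R) : continuous F ->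
  continuous (fun v : V => \sum_p F (pt_of_rV v p)).
Proof.
move=> cF; apply: continuous_big => [|p _]; first exact: add_continuous.
by move=> v; apply: continuous_comp; [exact: pt_of_rV_continuous | exact: cF].
Qed.

(* A maximiser of the squared norm is extreme, by strict convexity. *)
Lemma exists_vertex_compact (S : set (pt R n)) :
  pt_of_rV @^-1` S !=set0 -> compact (pt_of_rV @^-1` S) ->
  exists x, is_vertex S x.
Proof.
move=> S0 cS; have csq : continuous (fun r : R => r ^+ 2).
  by move=> r; apply: continuousM; exact: cvg_id.
have [v /set_mem Sv v_max] :=
  EVT_max_rV S0 cS (continuous_subspaceT (sum_pt_of_rV_continuous csq)).
exists (pt_of_rV v); split=> // y z a Sy Sz a_gt0 a_lt1 yz_v.
have le_sq u : S u -> \sum_p u p ^+ 2 <= \sum_p pt_of_rV v p ^+ 2.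
  move=> Su; rewrite -{1}[u]rV_of_ptK.
  by apply: v_max; rewrite inE /= rV_of_ptK.
have a1_gt0 : 0 < 1 - a by rewrite subr_gt0.
have gap_le0 : a * (1 - a) * \sum_p (y p - z p) ^+ 2 <= 0.
  have conv : \sum_p pt_of_rV v p ^+ 2 = a * \sum_p y p ^+ 2 + (1 - a) *
      \sum_p z p ^+ 2 - a * (1 - a) * \sum_p (y p - z p) ^+ 2.
    by rewrite -sumsq_convex; apply: eq_bigr => p _; rewrite yz_v.
  have := le_sq y Sy; rewrite -(ler_pM2l a_gt0) => hy.
  have := le_sq z Sz; rewrite -(ler_pM2l a1_gt0) => hz.
  nra.
have /psumr_eq0P gap0 : \sum_p (y p - z p) ^+ 2 = 0.
  apply/le_anti; rewrite sumr_ge0 ?andbT => [|p _]; last exact: sqr_ge0.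
  by move: gap_le0; rewrite pmulr_rle0 // mulr_gt0.
apply/ffunP => p; apply/eqP; rewrite -subr_eq0 -sqrf_eq0; apply/eqP.
by apply: gap0 => // q _; exact: sqr_ge0.
Qed.

End RowEncoding.
Arguments pt_of_rV {R n} v.
Arguments rV_of_pt {R n} x.

Section FWCompact.
Variables (R : realType) (n m : nat) (t : 'I_m -> pt R n) (w : 'I_m -> R).
Hypotheses (m_gt0 : (0 < m)%N) (w_gt0 : forall l, 0 < w l).
Hypothesis C_gt0 : (0 < 'C(n, 2))%N.
Local Open Scope classical_set_scope.
Local Notation V := 'rV[R]_#|{: Pr n}|.
Local Notation C := ('C(n, 2)%:R : R).

Lemma inH_ge (x : pt R n) b : inH x -> 0 <= b -> (forall p, x p <= b) ->
  forall q, - (#|{: Pr n}|%:R * b) <= x q.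
Proof.
move=> Hx b_ge0 le_b q.
have le_rest : \sum_(p | p != q) x p <= #|{: Pr n}|%:R * b.
  rewrite mulr_natl -sumr_const [X in _ <= X](bigD1 q) //=.
  by apply: ler_wpDl => //; exact: ler_sum.
have : x q + \sum_(p | p != q) x p = 0 by move: Hx; rewrite /inH (bigD1 q).
lra.
Qed.

Lemma FW_sublevel_le l b y : FWobj t w y <= b ->
  forall p, y p <= \sum_q `|t l q| + b / (w l * C).
Proof.
move=> le_b p.
have le_md : maxdiff y (t l) <= b / (w l * C).
  rewrite ler_pdivlMr ?mulr_gt0 ?ltr0n // mulrC -mulrA.
  exact: le_trans (FWobj_ge_term t w_gt0 y l) le_b.
have le_t : t l p <= \sum_q `|t l q|.
  by apply: le_trans (ler_norm _) _; rewrite (bigD1 p) //= lerDl sumr_ge0.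
by have := le_maxdiff y (t l) p; lra.
Qed.

Lemma FW_sublevel_bounded : exists M, forall y, inH y ->
  FWobj t w y <= FWobj t w 0 -> forall p, `|y p| <= M.
Proof.
pose l0 := Ordinal m_gt0.
pose B := \sum_q `|t l0 q| + FWobj t w 0 / (w l0 * C).
have F0_ge0 : 0 <= FWobj t w 0.
  apply: le_trans (FWobj_ge_term t w_gt0 0 l0).
  by rewrite mulr_ge0 ?mulr_ge0 ?maxdiff_ge0 // ltW.
have B_ge0 : 0 <= B.
  by rewrite addr_ge0 ?sumr_ge0 ?divr_ge0 // ltW // mulr_gt0 ?ltr0n.
exists (#|{: Pr n}|%:R * B) => y Hy le_y p; rewrite ler_norml.
have le_B := FW_sublevel_le l0 le_y.
rewrite inH_ge //=; apply: le_trans (le_B p) _.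
by rewrite ler_peMl // ler1n; apply/card_gt0P; exists p.
Qed.

Lemma FWobj_continuous : continuous (fun v : V => FWobj t w (pt_of_rV v)).
Proof.
have md_cont l : continuous (fun v : V => maxdiff (pt_of_rV v) (t l)).
  apply: (continuous_big max_continuous) => p _ u.
  by apply: continuousB; [exact: pt_of_rV_continuous | exact: cst_continuous].
apply: continuous_big => [|l _ v]; first exact: add_continuous.
have := continuousM (@cst_continuous _ _ (w l) v)
  (continuousM (@cst_continuous _ _ C v) (md_cont l v)).
exact.
Qed.

Lemma FW_nonempty_compact :
  pt_of_rV @^-1` inFW t w !=set0 /\ compact (pt_of_rV @^-1` inFW t w).
Proof.
pose G v := FWobj t w (pt_of_rV v).
have G_cont : continuous G := FWobj_continuous.
pose L := (fun v : V => \sum_p pt_of_rV v p) @^-1` [set r | r = 0]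
  `&` G @^-1` [set r | r <= FWobj t w 0].
have L_closed : closed L.
  apply: closedI; apply: preimage_closed;
    [| exact: closed_eq | | exact: closed_le].
    by move=> v _; apply: (@sum_pt_of_rV_continuous _ _ id) => r; exact: cvg_id.
  by move=> v _; exact: G_cont.
have inL y : inH y -> FWobj t w y <= FWobj t w 0 -> L (rV_of_pt y).
  by move=> Hy le_y; split=> /=; rewrite ?/G rV_of_ptK.
have [M M_bound] := FW_sublevel_bounded.
have box_compact : compact [set v : V | forall i, `[- M, M]%classic (v ord0 i)].
  apply: (@rV_compact _ _ (fun=> `[- M, M]%classic)) => _.
  exact: segment_compact.
have L_compact : compact L.
  apply: subclosed_compact L_closed box_compact _ => v [/= Hv le_v] i.
  rewrite /= in_itv /= -ler_norml.
  by have := M_bound _ Hv le_v (enum_val i); rewrite ffunE enum_valK.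
have H0 : inH (0 : pt R n) by rewrite /inH big1 // => p _; rewrite ffunE.
have [v1 /set_mem Lv1 v1_min] := EVT_min_rV (ex_intro _ _ (inL 0 H0 (lexx _)))
  L_compact (continuous_subspaceT G_cont).
have v1_minH y : inH y -> G v1 <= FWobj t w y.
  move=> Hy; have [le_y|lt_y] := leP (FWobj t w y) (FWobj t w 0).
    by rewrite -[y]rV_of_ptK; apply: v1_min; rewrite inE; exact: inL.
  apply: le_trans (ltW lt_y); rewrite -[X in _ <= FWobj t w X](rV_of_ptK 0).
  by apply: v1_min; rewrite inE; exact: inL.
have -> : pt_of_rV @^-1` inFW t w = L `&` G @^-1` [set r | r <= G v1].
  apply/seteqP; split=> v /=.
    case=> Hv v_min; do !split; first exact: Hv.
      exact: v_min H0.
    exact: v_min Lv1.1.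
  case=> -[Hv _] /= le_v; split=> // y Hy.
  exact: le_trans le_v (v1_minH y Hy).
split; first by exists v1; split=> /=.
apply: compact_closedI => //; apply: preimage_closed; last exact: closed_le.
by move=> v _; exact: G_cont.
Qed.

End FWCompact.

Theorem corollary4p4 (R : realType) (n m : nat)
  (t : 'I_m -> pt R n) (w : 'I_m -> R) (c : pt R n) :
  (3 <= n)%N -> (0 < m)%N ->
  (forall l, inTn (t l)) -> (forall l, 0 < w l) ->
  is_consensus t w c ->
  forall i j k : 'I_n, i != j -> i != k -> j != k ->
    ((forall l, contains_triple (t l) i j k) -> contains_triple c i j k) /\
    (contains_triple c i j k -> exists l, contains_triple (t l) i j k).
Proof.
(* 3 <= n is implied by the distinctness of i, j, k. *)
move=> _ m_gt0 t_Tn w_gt0 [s [_ s_vertices c_mean]] i j k ij ik jk.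
have tH l : inH (t l) by case: (t_Tn l).
have v_minplus v : v \in s ->
    is_minplus (fun l p => t l p) (fun l => maxdiff v (t l)) v.
  by move/s_vertices => [FWv _]; exact: FW_minplus.
split=> [all_T | cT].
- have [FW0 FWc] := FW_nonempty_compact t m_gt0 w_gt0 (binom2_gt0 (pair_of ij)).
  have [v0 /s_vertices v0s] := exists_vertex_compact FW0 FWc.
  have s0 : s != [::] by case: s v0s {s_vertices c_mean v_minplus}.
  have t_T l := (contains_tripleE (t l) ij ik jk).1 (all_T l).
  apply/(contains_tripleE c ij ik jk); rewrite !c_mean; split.
    apply: mean_lt => // v /v_minplus vP.
    by apply: (minplus_lt vP) => l; case: (t_T l).
  congr (_ * _); apply: eq_big_seq => v /v_minplus vP.
  by apply/le_anti; rewrite !(minplus_le vP) // => l; case: (t_T l) => _ ->.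
- apply: contrapT => noT.
  have le_t l : t l (pair_of ij) <= t l (pair_of ik).
    apply: (ultrametric_not_triple ij ik jk (t_Tn l).2) => tT.
    by apply: noT; exists l.
  have [+ _] := (contains_tripleE c ij ik jk).1 cT; rewrite !c_mean.
  apply/negP; rewrite -leNgt; apply: mean_le => v /v_minplus vP.
  exact: (minplus_le vP).
Qed.
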